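(* Let $\mathcal O=\mathbb Z_p[\mathrm{Im}\,\psi]$ for a character $\psi$ of a finite abelian group with values in $\overline{\mathbb Q}_p^\times$, with uniformizer $\pi$, let $\Gamma\cong\mathbb Z_p^2$ with topological generators $\gamma_1,\gamma_2$, and $\Lambda=\mathcal O[[\Gamma]]$. Let $\mathcal E=\{(a_1,a_2)\in\mathbb Z_p^2: a_1\mathbb Z_p+a_2\mathbb Z_p=\mathbb Z_p\}$. If $(a_1,a_2),(b_1,b_2)\in\mathcal E$ satisfy $(\gamma_1^{a_1}\gamma_2^{a_2}-1,\pi)=(\gamma_1^{b_1}\gamma_2^{b_2}-1,\pi)$ as ideals of $\Lambda$, then there exists $e\in\mathbb Z_p^\times$ with $(b_1,b_2)=(ea_1,ea_2)$. *)

From mathcomp Require Import all_boot all_algebra.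
Set Implicit Arguments. Unset Strict Implicit. Unset Printing Implicit Defensive.
Import GRing.Theory.
Local Open Scope ring_scope.

(* ---------- p-adic integers Z_p ----------
   An element of Z_p is represented by its canonical sequence of residues:
   a n is the representative in [0, p^n) of a mod p^n, and the sequence is
   compatible.  Two elements are equal iff their sequences agree pointwise. *)
Definition zp (p : nat) (a : nat -> nat) : Prop :=
  forall n, (a n < p ^ n)%N /\ (a n.+1 = a n %[mod p ^ n])%N.

Definition zeq (a b : nat -> nat) : Prop := forall n, a n = b n.
Definition zadd (p : nat) (a b : nat -> nat) : nat -> nat :=
  fun n => ((a n + b n) %% p ^ n)%N.
Definition zmul (p : nat) (a b : nat -> nat) : nat -> nat :=
  fun n => ((a n * b n) %% p ^ n)%N.
Definition zone (p : nat) : nat -> nat := fun n => (1 %% p ^ n)%N.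

Definition zunit (p : nat) (e : nat -> nat) : Prop :=
  exists e', zp p e' /\ zeq (zmul p e e') (zone p).

Definition zgen_unit_ideal (p : nat) (a1 a2 : nat -> nat) : Prop :=
  exists u v, zp p u /\ zp p v /\
    zeq (zadd p (zmul p u a1) (zmul p v a2)) (zone p).

(* the p-adic binomial coefficient binom(a, k) in Z_p: binom(., k) is
   p-adically continuous, x = y mod p^(n + v_p(k!)) implies
   binom(x,k) = binom(y,k) mod p^n. *)
Definition zbinom (p : nat) (a : nat -> nat) (k : nat) : nat -> nat :=
  fun n => ('C(a (n + logn p k`!)%N, k) %% p ^ n)%N.

Definition padic_int_ring (p : nat) (O : idomainType) (pi : O) : Prop :=
  pi != 0 /\ pi \isn't a GRing.unit /\
  (forall x : O, x != 0 ->
     exists u n, u \is a GRing.unit /\ x = u * pi ^+ n) /\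
  (forall n : nat, (0 < n)%N -> (n%:R : O) != 0) /\
  (exists c : O, p%:R = pi * c) /\
  (exists s : seq O, forall x : O,
     exists y, y \in s /\ exists c, x - y = pi * c) /\
  (forall x : nat -> O,
    (forall n, exists c, x n.+1 - x n = pi ^+ n * c) ->
    exists l, forall n, exists c, l - x n = pi ^+ n * c).

Definition zp_embedding (p : nat) (O : idomainType) (iota : (nat -> nat) -> O) : Prop :=
  forall a, zp p a -> forall n, exists c : O, iota a - (a n)%:R = (p%:R) ^+ n * c.

(* ---------- Lambda = O[[Gamma]] = O[[T1,T2]], gamma_i = 1 + T_i ---------- *)
Definition ps2 (R : Type) := nat -> nat -> R.

Definition ps_add (R : ringType) (f g : ps2 R) : ps2 R := fun i j => f i j + g i j.
Definition ps_sub (R : ringType) (f g : ps2 R) : ps2 R := fun i j => f i j - g i j.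
Definition ps_mul (R : ringType) (f g : ps2 R) : ps2 R :=
  fun i j => \sum_(k < i.+1) \sum_(l < j.+1) f k l * g (i - k)%N (j - l)%N.
Definition ps_const (R : ringType) (c : R) : ps2 R :=
  fun i j => if (i == 0)%N && (j == 0)%N then c else 0.

Definition ideal2 (R : ringType) (f g : ps2 R) (x : ps2 R) : Prop :=
  exists u v : ps2 R, forall i j, x i j = ps_add (ps_mul u f) (ps_mul v g) i j.

(* gamma_1^a1 gamma_2^a2 = (1+T1)^a1 (1+T2)^a2
   = sum_{i,j} binom(a1,i) binom(a2,j) T1^i T2^j *)
Definition gamma_pow (p : nat) (O : idomainType) (iota : (nat -> nat) -> O)
  (a1 a2 : nat -> nat) : ps2 O :=
  fun i j => iota (zbinom p a1 i) * iota (zbinom p a2 j).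

Definition gamma_pow_m1 (p : nat) (O : idomainType) (iota : (nat -> nat) -> O)
  (a1 a2 : nat -> nat) : ps2 O :=
  ps_sub (gamma_pow p iota a1 a2) (ps_const 1).

From mathcomp Require Import all_boot all_algebra ring.
Import GRing.Theory.
Set Implicit Arguments. Unset Strict Implicit. Unset Printing Implicit Defensive.

(* Substitute T_i := (1 + X)^(c_i) - 1 in a power series truncated in degrees
   below M = p^N and reduce modulo (pi, X^M).  Then gamma_1^a1 gamma_2^a2 - 1
   becomes (1 + X)^(c_1 a_1 + c_2 a_2) - 1, and (1 + X)^m - 1 vanishes modulo
   (pi, X^M) exactly when p^N divides m.  With (c_1, c_2) = (a_2, -a_1) mod p^N
   the generator gamma^a - 1 vanishes, hence so does the whole ideal
   (gamma^a - 1, pi) and in particular gamma^b - 1; this says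
   a_1 b_2 = a_2 b_1 mod p^N for every N.  Since (a_1, a_2) is unimodular one of
   its coordinates, say a_1, is a unit, and e = b_1 / a_1 works; e is a unit
   because (b_1, b_2) = e (a_1, a_2) is unimodular too. *)

Definition inv_mod (m x : nat) : nat := (egcdn x m).1.

Lemma mulnV_mod m x : coprime x m -> x * inv_mod m x = 1 %[mod m].
Proof.
case: x => [|x] cx.
  by move: cx; rewrite /coprime gcd0n => /eqP ->; rewrite !modn1.
rewrite /inv_mod; case: (egcdnP m (ltn0Sn x)) => km kn e _ /=.
by move/eqP: cx e => -> e; rewrite mulnC e modnMDl.
Qed.

Lemma mulIn_mod m u x y : coprime u m -> x * u = y * u %[mod m] -> x = y %[mod m].
Proof.
move=> /mulnV_mod cu e.
by rewrite -[x]muln1 -[y]muln1 -modnMmr -[in RHS]modnMmr -cu !modnMmr !mulnA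
  -modnMml e modnMml.
Qed.

Lemma eqmod_dvdn_add_predM M x y : 0 < M -> M %| x + M.-1 * y -> x = y %[mod M].
Proof.
move=> M0 /dvdnP [k hk].
have e : x + M * y = k * M + y by rewrite -hk -{1}(prednK M0) mulSn addnA addnAC.
by rewrite -[LHS](modnMDl y x) mulnC addnC e modnMDl.
Qed.

Lemma ffact_cong d x t k : (x + d * t) ^_ k = x ^_ k %[mod d].
Proof.
elim: k x => [|k IH] [|x] //.
  by rewrite add0n ffact0n /= ffactnS -mulnA modnMr mod0n.
by rewrite addSn !ffactSS -modnMm IH -addSn (mulnC d t) addnC modnMDl modnMm.
Qed.

Lemma bin_cong p n k x y : prime p ->
  x = y %[mod p ^ (n + logn p k`!)] -> 'C(x, k) = 'C(y, k) %[mod p ^ n].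
Proof.
move=> p_pr; wlog le_xy : x y / x <= y.
  by move=> W; case: (leqP x y) => [|/ltnW] /W // W' /esym/W'.
move=> /eqP; rewrite eq_sym eqn_mod_dvd // => /dvdnP [t ht].
have -> : y = x + p ^ (n + logn p k`!) * t by rewrite mulnC -ht subnKC.
have [u p_u k_fact] := pfactor_coprime p_pr (fact_gt0 k).
apply: (@mulIn_mod _ u); first by rewrite coprimeXr // coprime_sym.
have pl_gt0 : 0 < p ^ logn p k`! by rewrite expn_gt0 prime_gt0.
apply/eqP; rewrite -(eqn_pmul2r pl_gt0) !muln_modl -expnD -!mulnA -k_fact.
by rewrite !bin_ffact ffact_cong.
Qed.

Lemma dvdn_bin_pfactor p N t : prime p -> 0 < t < p ^ N -> p %| 'C(p ^ N, t).
Proof.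
move=> p_pr /andP [t_gt0 t_lt]; apply: contraT => p_ndvd.
have : p ^ N %| t * 'C(p ^ N, t) by rewrite -(prednK t_gt0) -mul_bin_diag dvdn_mulr.
rewrite Gauss_dvdl ?coprimeXl ?prime_coprime // => /(dvdn_leq t_gt0).
by rewrite leqNgt t_lt.
Qed.

Section PAdicIntegers.

Variable p : nat.
Hypothesis p_pr : prime p.

Let dvdn_expS n : p ^ n %| p ^ n.+1. Proof. exact/dvdn_exp2l/leqnSn. Qed.

Lemma zp_cong a m n : zp p a -> n <= m -> a m = a n %[mod p ^ n].
Proof.
move=> za; elim: m => [|m IH]; first by rewrite leqn0 => /eqP ->.
rewrite leq_eqVlt ltnS => /predU1P [<- // | le_nm].
by rewrite -IH // -(modn_dvdm _ (dvdn_exp2l p le_nm)) (za m).2 modn_dvdm ?dvdn_exp2l.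
Qed.

Lemma zp_mod (x : nat -> nat) :
  (forall n, x n.+1 = x n %[mod p ^ n]) -> zp p (fun n => x n %% p ^ n).
Proof.
move=> x_cong n; split; first by rewrite ltn_pmod ?expn_gt0 ?prime_gt0.
by rewrite (modn_dvdm _ (dvdn_expS n)) modn_mod x_cong.
Qed.

Lemma zp_zmul a b : zp p a -> zp p b -> zp p (zmul p a b).
Proof. by move=> za zb; apply: zp_mod => n; rewrite -modnMm (za n).2 (zb n).2 modnMm. Qed.

Lemma zp_zadd a b : zp p a -> zp p b -> zp p (zadd p a b).
Proof. by move=> za zb; apply: zp_mod => n; rewrite -modnDm (za n).2 (zb n).2 modnDm. Qed.

Lemma zeq_mod a b : zp p a -> zp p b ->
  (forall n, a n = b n %[mod p ^ n]) -> zeq a b.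
Proof. by move=> za zb ab n; rewrite -(modn_small (za n).1) ab modn_small // (zb n).1. Qed.

Lemma zp_zbinom a k : zp p a -> zp p (zbinom p a k).
Proof.
move=> za; apply: zp_mod => n; apply: bin_cong => //.
by apply: zp_cong; rewrite // addSn.
Qed.

Lemma coprime_zp a n : zp p a -> ~~ (p %| a 1) -> coprime (a n) (p ^ n).
Proof.
move=> za p_ndvd; case: n => [|n]; first by rewrite coprimen1.
rewrite coprimeXr // coprime_sym prime_coprime //.
by rewrite /dvdn -(expn1 p) (zp_cong za) // expn1.
Qed.

Lemma zunit_coprime a : zp p a -> ~~ (p %| a 1) -> zunit p a.
Proof.
move=> za p_ndvd; have a_co n := coprime_zp n za p_ndvd.
exists (fun n => inv_mod (p ^ n) (a n) %% p ^ n); split => [|n]; last first.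
  by rewrite /zmul /zone modnMmr mulnV_mod.
apply: zp_mod => n; apply: (@mulIn_mod _ (a n)) => //.
have inv_S : a n.+1 * inv_mod (p ^ n.+1) (a n.+1) = 1 %[mod p ^ n].
  by rewrite -(modn_dvdm _ (dvdn_expS n)) mulnV_mod // modn_dvdm.
by rewrite [in RHS]mulnC mulnV_mod // -modnMmr -(za n).2 modnMmr mulnC inv_S.
Qed.

Lemma zgen_unit_idealC a1 a2 : zgen_unit_ideal p a1 a2 -> zgen_unit_ideal p a2 a1.
Proof.
move=> [u [v [zu [zv uv]]]]; exists v, u; split => //; split => // n.
by rewrite -uv /zadd addnC.
Qed.

Lemma zgen_unit_ideal_ndvd a1 a2 : zgen_unit_ideal p a1 a2 ->
  ~~ (p %| a1 1) \/ ~~ (p %| a2 1).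
Proof.
move=> [u [v [_ [_ /(_ 1%N)]]]]; rewrite /zadd /zmul /zone modnDm expn1 => uv.
have [p_a1|] := boolP (p %| a1 1); last by left.
right; apply/negP => p_a2.
have : p %| u 1 * a1 1 + v 1 * a2 1 by rewrite dvdn_add ?dvdn_mull.
by rewrite /dvdn uv modn_small ?prime_gt1.
Qed.

Lemma zp_proportional a1 a2 b1 b2 :
  zp p a1 -> zp p a2 -> zp p b1 -> zp p b2 ->
  zgen_unit_ideal p a1 a2 -> zgen_unit_ideal p b1 b2 ->
  (forall n, a1 n * b2 n = a2 n * b1 n %[mod p ^ n]) ->
  exists e, [/\ zp p e, zunit p e, zeq b1 (zmul p e a1) & zeq b2 (zmul p e a2)].
Proof.
move=> za1 za2 zb1 zb2 ua ub cross.
wlog p_a1 : a1 a2 b1 b2 za1 za2 zb1 zb2 ua ub cross / ~~ (p %| a1 1).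
  move=> W; have [|p_a2] := zgen_unit_ideal_ndvd ua; first exact: W.
  have [e [ze ue e2 e1]] := W a2 a1 b2 b1 za2 za1 zb2 zb1 (zgen_unit_idealC ua)
    (zgen_unit_idealC ub) (fun n => esym (cross n)) p_a2.
  by exists e.
have [a' [za' inv_a1]] := zunit_coprime za1 p_a1.
have {}inv_a1 n : a1 n * a' n = 1 %[mod p ^ n] := inv_a1 n.
pose e := zmul p b1 a'.
have ze : zp p e by apply: zp_zmul.
have e_a1 n : e n * a1 n = b1 n %[mod p ^ n].
  by rewrite modnMml -mulnA -modnMmr (mulnC (a' n)) inv_a1 modnMmr muln1.
have e_a2 n : e n * a2 n = b2 n %[mod p ^ n].
  rewrite modnMml (_ : b1 n * a' n * a2 n = a' n * (a2 n * b1 n)); last by ring.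
  by rewrite -modnMmr -cross modnMmr mulnA (mulnC (a' n)) -modnMml inv_a1 modnMml mul1n.
have [u [v [zu [zv uv]]]] := ub.
exists e; split.
- exact: ze.
- exists (zadd p (zmul p u a1) (zmul p v a2)); split; first by apply: zp_zadd; apply: zp_zmul.
  move=> n; rewrite -uv /zadd /zmul !modnDm modnMmr mulnDr 2!(mulnCA (e n)) -modnDm.
  by rewrite -(modnMmr (u n)) e_a1 -(modnMmr (v n)) e_a2 !modnMmr modnDm.
- by apply: zeq_mod zb1 (zp_zmul ze za1) _ => n; rewrite /zmul modn_mod e_a1.
- by apply: zeq_mod zb2 (zp_zmul ze za2) _ => n; rewrite /zmul modn_mod e_a2.
Qed.

End PAdicIntegers.

Local Open Scope ring_scope.

Section PiDivisibility.

Variables (R : comNzRingType) (pi : R).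

Definition pi_dvd (x : R) : Prop := exists c, x = pi * c.

Lemma pi_dvd0 : pi_dvd 0.
Proof. by exists 0; rewrite mulr0. Qed.

Lemma pi_dvdD x y : pi_dvd x -> pi_dvd y -> pi_dvd (x + y).
Proof. by move=> [c ->] [d ->]; exists (c + d); rewrite mulrDr. Qed.

Lemma pi_dvdN x : pi_dvd x -> pi_dvd (- x).
Proof. by move=> [c ->]; exists (- c); rewrite mulrN. Qed.

Lemma pi_dvdB x y : pi_dvd x -> pi_dvd y -> pi_dvd (x - y).
Proof. by move=> px /pi_dvdN; apply: pi_dvdD. Qed.

Lemma pi_dvdMl x y : pi_dvd y -> pi_dvd (x * y).
Proof. by move=> [c ->]; exists (x * c); rewrite mulrCA. Qed.

Lemma pi_dvdMr x y : pi_dvd x -> pi_dvd (x * y).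
Proof. by rewrite mulrC; apply: pi_dvdMl. Qed.

Lemma pi_dvd_sum I (r : seq I) (P : pred I) (F : I -> R) :
  (forall i, P i -> pi_dvd (F i)) -> pi_dvd (\sum_(i <- r | P i) F i).
Proof. by move=> F_dvd; apply: big_ind => //; [apply: pi_dvd0 | apply: pi_dvdD]. Qed.

Definition vanish_mod (M : nat) (q : {poly R}) : Prop :=
  forall t, (t < M)%N -> pi_dvd q`_t.

Definition vanish_mod2 (M : nat) (Q : {poly {poly R}}) : Prop :=
  forall i j, (i < M)%N -> (j < M)%N -> pi_dvd Q`_i`_j.

Variable M : nat.

Lemma vanish_modD q r : vanish_mod M q -> vanish_mod M r -> vanish_mod M (q + r).
Proof. by move=> vq vr t ltM; rewrite coefD; apply: pi_dvdD; [apply: vq | apply: vr]. Qed.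

Lemma vanish_modB q r : vanish_mod M q -> vanish_mod M r -> vanish_mod M (q - r).
Proof. by move=> vq vr t ltM; rewrite coefB; apply: pi_dvdB; [apply: vq | apply: vr]. Qed.

Lemma vanish_modMl q r : vanish_mod M q -> vanish_mod M (r * q).
Proof.
move=> vq t ltM; rewrite coefM; apply: pi_dvd_sum => j _; apply/pi_dvdMl/vq.
exact: leq_ltn_trans (leq_subr _ _) ltM.
Qed.

Lemma vanish_modMr q r : vanish_mod M q -> vanish_mod M (q * r).
Proof. by rewrite mulrC; apply: vanish_modMl. Qed.

Lemma vanish_mod_sum I (r : seq I) (P : pred I) (F : I -> {poly R}) :
  (forall i, P i -> vanish_mod M (F i)) -> vanish_mod M (\sum_(i <- r | P i) F i).
Proof. by move=> vF t ltM; rewrite coef_sum; apply: pi_dvd_sum => i /vF; apply. Qed.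

Lemma vanish_modC c : pi_dvd c -> vanish_mod M c%:P.
Proof. by move=> pc t _; rewrite coefC; case: eqP => _ //; apply: pi_dvd0. Qed.

Lemma vanish_mod_mulX_exp (W : {poly R}) i : (M <= i)%N -> vanish_mod M (('X * W) ^+ i).
Proof.
move=> le_Mi t ltM; rewrite exprMn -(subnKC le_Mi) exprD -mulrA coefXnM ltM.
exact: pi_dvd0.
Qed.

Lemma vanish_mod_comp_mulX q (W : {poly R}) :
  vanish_mod M q -> vanish_mod M (q \Po ('X * W)).
Proof.
move=> vq; rewrite comp_polyE; apply: vanish_mod_sum => i _; rewrite -mul_polyC.
have [ltM|leM] := ltnP i M; first by apply/vanish_modMr/vanish_modC/vq.
exact/vanish_modMl/vanish_mod_mulX_exp.
Qed.

Definition subst2 (Y1 Y2 : {poly R}) (Q : {poly {poly R}}) : {poly R} :=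
  (map_poly (comp_poly Y2) Q).[Y1].

Lemma subst2D Y1 Y2 Q Q' : subst2 Y1 Y2 (Q + Q') = subst2 Y1 Y2 Q + subst2 Y1 Y2 Q'.
Proof. by rewrite /subst2 rmorphD hornerD. Qed.

Lemma subst2B Y1 Y2 Q Q' : subst2 Y1 Y2 (Q - Q') = subst2 Y1 Y2 Q - subst2 Y1 Y2 Q'.
Proof. by rewrite /subst2 rmorphB hornerD hornerN. Qed.

Lemma subst2M Y1 Y2 Q Q' : subst2 Y1 Y2 (Q * Q') = subst2 Y1 Y2 Q * subst2 Y1 Y2 Q'.
Proof. by rewrite /subst2 rmorphM hornerM. Qed.

Lemma subst2C Y1 Y2 q : subst2 Y1 Y2 q%:P = q \Po Y2.
Proof. by rewrite /subst2 map_polyC hornerC. Qed.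

Lemma subst2_polyC Y1 Y2 q : subst2 Y1 Y2 (map_poly polyC q) = q \Po Y1.
Proof.
rewrite /subst2 -map_poly_comp /comp_poly; congr (_.[Y1]).
by apply: eq_map_poly => c /=; rewrite comp_polyC.
Qed.

Lemma vanish_mod_subst2 W1 W2 Q :
  vanish_mod2 M Q -> vanish_mod M (subst2 ('X * W1) ('X * W2) Q).
Proof.
move=> vQ; rewrite /subst2 horner_coef; apply: vanish_mod_sum => i _; rewrite coef_map /=.
have [ltM|leM] := ltnP i M; last exact/vanish_modMl/vanish_mod_mulX_exp.
by apply/vanish_modMr/vanish_mod_comp_mulX => j; apply: vQ.
Qed.

Definition trunc2 (f : ps2 R) : {poly {poly R}} := \poly_(i < M) \poly_(j < M) f i j.

Lemma coef_trunc2 f i j : (i < M)%N -> (j < M)%N -> (trunc2 f)`_i`_j = f i j.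
Proof. by move=> ltiM ltjM; rewrite /trunc2 coef_poly ltiM coef_poly ltjM. Qed.

Lemma trunc2B f g : trunc2 (ps_sub f g) = trunc2 f - trunc2 g.
Proof.
apply/polyP => i; rewrite coefB /trunc2 !coef_poly; case: ifP => _; last by rewrite subr0.
by apply/polyP => j; rewrite coefB !coef_poly; case: ifP => _; rewrite ?subr0.
Qed.

Lemma trunc2_const c : (0 < M)%N -> trunc2 (ps_const c) = c%:P%:P.
Proof.
move=> M_gt0; apply/polyP => i; apply/polyP => j; rewrite /trunc2 /ps_const !coefC !coef_poly.
case: i => [|i] /=; last by rewrite coef0; case: ifP; rewrite ?coef_poly ?coef0 //; case: ifP.
by rewrite M_gt0 coef_poly coefC; case: j => [|j] /=; rewrite ?M_gt0 //; case: ifP.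
Qed.

Lemma coef_trunc2_mul f g i j : (i < M)%N -> (j < M)%N ->
  (trunc2 f * trunc2 g)`_i`_j = ps_mul f g i j.
Proof.
move=> ltiM ltjM; rewrite coefM coef_sum; apply: eq_bigr => -[k le_ki] _; rewrite coefM.
apply: eq_bigr => -[l le_lj] _ /=.
have ltkM : (k < M)%N := leq_ltn_trans (ltnSE le_ki) ltiM.
have ltlM : (l < M)%N := leq_ltn_trans (ltnSE le_lj) ltjM.
have ltikM : (i - k < M)%N := leq_ltn_trans (leq_subr _ _) ltiM.
have ltjlM : (j - l < M)%N := leq_ltn_trans (leq_subr _ _) ltjM.
by rewrite !coef_trunc2.
Qed.

Lemma vanish_mod_subst2_ideal2 W1 W2 f g x :
  let S F := subst2 ('X * W1) ('X * W2) (trunc2 F) in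
  ideal2 f g x -> vanish_mod M (S f) -> vanish_mod M (S g) -> vanish_mod M (S x).
Proof.
move=> S [u [v uv]] vf vg; rewrite /S.
pose D := trunc2 x - (trunc2 u * trunc2 f + trunc2 v * trunc2 g).
have vD : vanish_mod2 M D.
  move=> i j ltiM ltjM; rewrite /D !(coefB, coefD) !coef_trunc2_mul // coef_trunc2 // uv.
  by rewrite subrr; apply: pi_dvd0.
have -> : trunc2 x = D + (trunc2 u * trunc2 f + trunc2 v * trunc2 g) by rewrite subrK.
clearbody D; rewrite !(subst2D, subst2M); apply: vanish_modD; first exact: vanish_mod_subst2.
by apply: vanish_modD; apply: vanish_modMl.
Qed.

End PiDivisibility.

Lemma coef_exp1DX (R : nzSemiRingType) n i : ((1 + 'X : {poly R}) ^+ n)`_i = 'C(n, i)%:R.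
Proof.
elim: n i => [|n IH] [|i]; rewrite ?expr0 ?coef1 // exprSr mulrDr mulr1 coefD coefMX IH /=.
  by rewrite !bin0 addr0.
by rewrite IH binS natrD.
Qed.

Section ResidueCharacteristic.

Variables (R : comUnitRingType) (pi : R) (p : nat).
Hypotheses (p_pr : prime p) (pi_dvd_p : pi_dvd pi p%:R) (pi_nonunit : pi \isn't a GRing.unit).

Lemma pi_dvd_natr n : (p %| n)%N -> pi_dvd pi n%:R.
Proof. by move=> /dvdnP [k ->]; rewrite natrM; apply: pi_dvdMl. Qed.

Lemma pi_dvd_natrB x y : x = y %[mod p] -> pi_dvd pi (x%:R - y%:R).
Proof.
wlog le_xy : x y / (x <= y)%N.
  by move=> W; case: (leqP x y) => [|/ltnW] /W // W' /esym/W'/pi_dvdN; rewrite opprB.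
move=> /eqP; rewrite eq_sym eqn_mod_dvd // => /pi_dvd_natr /pi_dvdN.
by rewrite natrB // opprB.
Qed.

Lemma pi_ndvd1 : ~ pi_dvd pi 1.
Proof. by move=> [c c_inv]; move/negP: pi_nonunit; apply; apply/unitrPr; exists c. Qed.

Lemma vanish_mod_exp1DX_sub1 N m :
  vanish_mod pi (p ^ N) ((1 + 'X) ^+ m - 1) <-> (p ^ N %| m)%N.
Proof.
have vanish_pN : vanish_mod pi (p ^ N) ((1 + 'X : {poly R}) ^+ (p ^ N) - 1).
  move=> [|t] ltM; rewrite coefB coef_exp1DX coef1 ?bin0 ?subrr; first exact: pi_dvd0.
  by rewrite subr0; apply/pi_dvd_natr/dvdn_bin_pfactor.
have vanish_pNk k : vanish_mod pi (p ^ N) ((1 + 'X : {poly R}) ^+ (p ^ N * k) - 1).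
  by rewrite exprM subrX1; apply: vanish_modMr.
split=> [vm|/dvdnP [k ->]]; last by rewrite mulnC.
set r := (m %% p ^ N)%N; set q := (m %/ p ^ N)%N.
have vr : vanish_mod pi (p ^ N) ((1 + 'X : {poly R}) ^+ r - 1).
  have -> : (1 + 'X : {poly R}) ^+ r - 1 =
      ((1 + 'X) ^+ m - 1) - (1 + 'X) ^+ r * ((1 + 'X) ^+ (p ^ N * q) - 1).
    by rewrite [in RHS](divn_eq m (p ^ N)) -/q -/r mulnC exprD; ring.
  by apply: vanish_modB => //; apply: vanish_modMl.
have ltrM : (r < p ^ N)%N by rewrite ltn_pmod ?expn_gt0 ?prime_gt0.
apply: contraT => ndvd; have := vr _ ltrM; rewrite coefB coef_exp1DX binn coef1.
by rewrite (negPf ndvd : (r == 0%N) = false) subr0; move/pi_ndvd1.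
Qed.

End ResidueCharacteristic.

Definition geomX (R : nzRingType) (c : nat) : {poly R} := \sum_(i < c) (1 + 'X) ^+ i.

Lemma mulX_geomX (R : nzRingType) c : 'X * geomX R c = (1 + 'X) ^+ c - 1.
Proof. by rewrite subrX1 addrAC subrr add0r. Qed.

Lemma comp_exp1DX_mulX_geomX (R : comNzRingType) A c :
  (1 + 'X) ^+ A \Po ('X * geomX R c) = (1 + 'X) ^+ (c * A).
Proof. by rewrite mulX_geomX rmorphXn rmorphD rmorph1 /= comp_polyX addrC subrK exprM. Qed.

Section GammaPowers.

Variables (O : idomainType) (pi : O) (p : nat) (iota : (nat -> nat) -> O).
Hypotheses (p_pr : prime p) (pi_dvd_p : pi_dvd pi p%:R) (pi_nonunit : pi \isn't a GRing.unit).
Hypothesis iotaP : zp_embedding p iota.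

Lemma pi_dvd_zbinom a i K : zp p a -> (1 + logn p i`! <= K)%N ->
  pi_dvd pi (iota (zbinom p a i) - 'C(a K, i)%:R).
Proof.
move=> za le_K; have [c iota_c] := iotaP (zp_zbinom p_pr i za) 1.
rewrite -[iota _](subrK (zbinom p a i 1)%:R) -addrA; apply: pi_dvdD.
  by rewrite iota_c expr1; apply: pi_dvdMr.
apply: (pi_dvd_natrB pi_dvd_p); rewrite /zbinom expn1 modn_mod.
have := @bin_cong p 1 i (a (1 + logn p i`!)) (a K) p_pr; rewrite expn1; apply.
by apply/esym/zp_cong.
Qed.

Lemma vanish_mod_gamma_pow_m1 M c1 c2 a1 a2 K : zp p a1 -> zp p a2 -> (0 < M)%N ->
  (forall i, (i < M)%N -> (1 + logn p i`! <= K)%N) ->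
  vanish_mod pi M (subst2 ('X * geomX O c1) ('X * geomX O c2)
                     (trunc2 M (gamma_pow_m1 p iota a1 a2))
                   - ((1 + 'X) ^+ (c1 * a1 K + c2 * a2 K) - 1)).
Proof.
move=> za1 za2 M_gt0 le_K.
rewrite trunc2B trunc2_const // subst2B subst2C comp_polyC opprB addrA subrK.
have -> : (1 + 'X) ^+ (c1 * a1 K + c2 * a2 K) = subst2 ('X * geomX O c1) ('X * geomX O c2)
    (map_poly polyC ((1 + 'X) ^+ a1 K) * ((1 + 'X) ^+ a2 K)%:P).
  by rewrite subst2M subst2_polyC subst2C !comp_exp1DX_mulX_geomX exprD.
rewrite -subst2B; apply: vanish_mod_subst2 => i j ltiM ltjM.
rewrite coefB coefB coef_trunc2 // coefMC coef_map coefCM /= !coef_exp1DX /gamma_pow.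
set x1 := iota _; set x2 := iota _.
rewrite (_ : x1 * x2 - _ =
    (x1 - 'C(a1 K, i)%:R) * x2 + 'C(a1 K, i)%:R * (x2 - 'C(a2 K, j)%:R)); last by ring.
by apply: pi_dvdD; [apply: pi_dvdMr | apply: pi_dvdMl]; apply: pi_dvd_zbinom => //; apply: le_K.
Qed.

Lemma ideal2_gamma_pow_m1_cross a1 a2 b1 b2 :
  zp p a1 -> zp p a2 -> zp p b1 -> zp p b2 ->
  ideal2 (gamma_pow_m1 p iota a1 a2) (ps_const pi) (gamma_pow_m1 p iota b1 b2) ->
  forall N, (a1 N * b2 N = a2 N * b1 N %[mod p ^ N])%N.
Proof.
move=> za1 za2 zb1 zb2 b_in N.
set M := (p ^ N)%N; set K := (N.+1 + logn p M`!)%N.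
have M_gt0 : (0 < M)%N by rewrite expn_gt0 prime_gt0.
have le_K i : (i < M)%N -> (1 + logn p i`! <= K)%N.
  move=> ltiM; apply: leq_add => //; apply: dvdn_leq_log; first exact: fact_gt0.
  by rewrite (fact_split (ltnW ltiM)) dvdn_mulr.
set c1 := a2 K; set c2 := (M.-1 * a1 K)%N.
set S := subst2 ('X * geomX O c1) ('X * geomX O c2).
have va := vanish_mod_gamma_pow_m1 c1 c2 za1 za2 M_gt0 le_K.
have vb := vanish_mod_gamma_pow_m1 c1 c2 zb1 zb2 M_gt0 le_K.
have vpi : vanish_mod pi M (S (trunc2 M (ps_const pi))).
  rewrite /S trunc2_const // subst2C comp_polyC.
  by apply: vanish_modC; exists 1; rewrite mulr1.
have {}va : vanish_mod pi M (S (trunc2 M (gamma_pow_m1 p iota a1 a2))).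
  rewrite -[S _](subrK ((1 + 'X) ^+ (c1 * a1 K + c2 * a2 K) - 1)); apply: vanish_modD va _.
  apply/(vanish_mod_exp1DX_sub1 p_pr pi_dvd_p pi_nonunit).
  by rewrite /c1 /c2 -mulnA (mulnC (a2 K)) -mulSn prednK // dvdn_mulr.
have := vanish_modB (vanish_mod_subst2_ideal2 b_in va vpi) vb.
rewrite subKr => /(vanish_mod_exp1DX_sub1 p_pr pi_dvd_p pi_nonunit).
rewrite /c2 -mulnA (mulnC c1) => /(eqmod_dvdn_add_predM M_gt0) cross_K.
have le_NK : (N <= K)%N by rewrite ltnW // ltnS leq_addr.
have prodK x y : zp p x -> zp p y -> (x K * y K = x N * y N %[mod M])%N.
  by move=> zx zy; rewrite -modnMm (zp_cong zx le_NK) (zp_cong zy le_NK) modnMm.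
by rewrite -prodK // -cross_K mulnC prodK.
Qed.

End GammaPowers.

Lemma ideal2_meml (R : nzRingType) (f g : ps2 R) : ideal2 f g f.
Proof.
exists (ps_const 1), (fun _ _ => 0) => i j; rewrite /ps_add /ps_mul.
rewrite [X in _ + X]big1 => [|k _]; last by rewrite big1 // => l _; rewrite mul0r.
rewrite addr0 big_ord_recl big_ord_recl /= !subn0 mul1r.
rewrite big1 ?addr0 => [|l _]; last by rewrite /ps_const /= mul0r.
by rewrite big1 ?addr0 // => k _; rewrite big1 // => l _; rewrite /ps_const /= mul0r.
Qed.

Unset Implicit Arguments.

Theorem lemma6p4 (p : nat) (O : idomainType) (pi : O) (iota : (nat -> nat) -> O)
  (a1 a2 b1 b2 : nat -> nat) :
  prime p -> padic_int_ring p pi -> zp_embedding p iota ->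
  zp p a1 -> zp p a2 -> zp p b1 -> zp p b2 ->
  zgen_unit_ideal p a1 a2 -> zgen_unit_ideal p b1 b2 ->
  (forall x : ps2 O,
     ideal2 (gamma_pow_m1 p iota a1 a2) (ps_const pi) x <->
     ideal2 (gamma_pow_m1 p iota b1 b2) (ps_const pi) x) ->
  exists e : nat -> nat,
    [/\ zp p e, zunit p e, zeq b1 (zmul p e a1) & zeq b2 (zmul p e a2)].
Proof.
move=> p_pr [_ [pi_nonunit [_ [_ [[c p_pi] _]]]]] iotaP za1 za2 zb1 zb2 ua ub ideal_eq.
have pi_dvd_p : pi_dvd pi p%:R by exists c.
apply: zp_proportional => //.
apply: (ideal2_gamma_pow_m1_cross p_pr pi_dvd_p pi_nonunit iotaP) => //.
exact/ideal_eq/ideal2_meml.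
Qed.
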